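(* Let $2\le n_0\le n_1$ be integers. Let $k=\frac{\log n_1}{\log n_0}$ and let $x_0$ be the unique root of the equation $x-1-x^{\frac{k-1}{k}}=0$ in the interval $[1,\infty)$. Then $$ch(K_{n_0,n_1})\le \left\lceil \frac{\log n_1}{\log x_0}\right\rceil+1.$$
   Context: All logarithms are to base 2. For a graph $G=(V,E)$, the choice number $ch(G)$ is the minimum integer $k$ such that for every assignment of a list $S(v)$ of at least $k$ colors to each vertex $v\in V$, there is a proper vertex coloring of $G$ assigning to each vertex $v$ a color from $S(v)$. $K_{n_0,n_1}$ denotes the complete bipartite graph with parts of sizes $n_0$ and $n_1$. *)

From HB Require Import structures.
From mathcomp Require Import all_boot all_order all_algebra.
From mathcomp Require Import boolp reals exp.
Set Implicit Arguments. Unset Strict Implicit. Unset Printing Implicit Defensive.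
Import Order.TTheory GRing.Theory Num.Theory.

(* A (simple) graph is a symmetric irreflexive relation e on a finType T. *)
Definition choosable (T : finType) (e : rel T) (k : nat) : Prop :=
  forall S : T -> seq nat,
    (forall v, k <= size (undup (S v)))%N ->
    exists c : T -> nat,
      (forall v, c v \in S v) /\ (forall u v, e u v -> c u != c v).

(* choice number: least k such that G is k-choosable (0 if none, which
   never happens for a finite graph). *)
Definition choice_number (T : finType) (e : rel T) : nat :=
  match pselect (exists k, `[< choosable e k >]) with
  | left H => ex_minn H
  | right _ => 0%N
  end.

Definition Kbip_rel (n0 n1 : nat) : rel ('I_n0 + 'I_n1)%type :=
  fun u v => match u, v with
             | inl _, inr _ | inr _, inl _ => true
             | _, _ => false
             end.

Definition log2 {R : realType} (x : R) : R := (ln x / ln 2)%R.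

(* Split the colors at random: each color independently goes to the left side
   with probability p = 1/x0 and to the right side otherwise, and a vertex can
   take any of its colors that went to its own side.  It is stuck only when all
   of its (at least t) colors went to the other side, so the expected number of stuck
   vertices is n0 (1 - p)^t + n1 p^t.  The root equation for x0 says exactly
   that 1 - p = p^(1/k), while n0 = n1^(1/k); hence for
   t = ceil (log n1 / log x0) + 1 we get n1 p^t <= p, n0 (1 - p)^t <= 1 - p, and
   the expectation is at most 1.  Equality can occur, but the outcome sending
   every color left has positive probability and leaves all n1 >= 2 right
   vertices stuck, so some outcome leaves no vertex stuck. *)

From HB Require Import structures.
From mathcomp Require Import all_boot all_order all_algebra.
From mathcomp Require Import boolp reals exp sequences.
From mathcomp Require Import ring lra.
Import Order.TTheory GRing.Theory Num.Theory.
Local Open Scope ring_scope.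

Lemma weighted_sum_gt1 (R : numDomainType) (J : finType) (w X : J -> R) (j0 : J) :
  \sum_j w j = 1 -> (forall j, 0 < w j) -> (forall j, 1 <= X j) -> 1 < X j0 ->
  1 < \sum_j w j * X j.
Proof.
move=> sum_w w_gt0 X_ge1 X_gt1.
have -> : \sum_j w j * X j = \sum_j w j + \sum_j w j * (X j - 1).
  by rewrite -big_split /=; apply: eq_bigr => j _; rewrite mulrBr mulr1 subrKC.
rewrite sum_w ltrDl (bigD1 j0) //=; apply: ltr_wpDr.
  by apply: sumr_ge0 => j _; rewrite mulr_ge0 ?subr_ge0 // ltW.
by rewrite mulr_gt0 ?subr_gt0.
Qed.

Section CoinFlips.
Variables (R : numDomainType) (I : finType) (p : R).

Definition coin_pmf (b : bool) : R := if b then p else 1 - p.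

Definition coins_pmf (f : {ffun I -> bool}) : R := \prod_i coin_pmf (f i).

Lemma sum_ffun_prod (G : I -> bool -> R) :
  \sum_(f : {ffun I -> bool}) \prod_i G i (f i) = \prod_i (G i true + G i false).
Proof. by rewrite -bigA_distr_bigA; apply: eq_bigr => i _; rewrite big_bool. Qed.

Lemma sum_coins_pmf : \sum_f coins_pmf f = 1.
Proof. by rewrite (sum_ffun_prod (fun=> coin_pmf)) big1 // => i _; rewrite subrKC. Qed.

Lemma coins_pmf_gt0 f : 0 < p < 1 -> 0 < coins_pmf f.
Proof.
by case/andP=> p0 p1; apply: prodr_gt0 => i _; case: (f i); rewrite /= ?subr_gt0.
Qed.

Lemma natr_forall_in (A : {set I}) (P : pred I) :
  [forall i in A, P i]%:R = \prod_(i in A) (P i)%:R :> R.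
Proof.
case: forall_inP => [allP | /forall_inP/forall_inPn[i iA /negbTE Pi]].
  by rewrite big1 // => i /allP ->.
by rewrite (bigD1 i) //= Pi mul0r.
Qed.

Lemma sum_coins_pmf_const_on (A : {set I}) (b : bool) :
  \sum_f coins_pmf f * [forall i in A, f i == b]%:R = coin_pmf b ^+ #|A|.
Proof.
pose G i c := coin_pmf c * (if i \in A then (c == b)%:R else 1).
transitivity (\sum_(f : {ffun I -> bool}) \prod_i G i (f i)).
  apply: eq_bigr => f _; rewrite natr_forall_in big_mkcond -big_split /=.
  by apply: eq_bigr => i _; rewrite /G; case: (i \in A).
rewrite sum_ffun_prod (bigID (mem A)) /= [X in _ * X]big1 => [|i /negbTE iA].
  rewrite mulr1 -prodr_const; apply: eq_bigr => i iA.
  by rewrite /G iA; case: (b); rewrite /= !mulr1 !mulr0 ?addr0 ?add0r.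
by rewrite /G iA !mulr1 subrKC.
Qed.

Lemma exists_ffun_avoiding (T : finType) (A : T -> {set I}) (b : T -> bool) :
  0 < p < 1 -> (1 < #|[set v | b v]|)%N ->
  \sum_v coin_pmf (b v) ^+ #|A v| <= 1 ->
  exists f : {ffun I -> bool}, forall v, exists2 i, i \in A v & f i != b v.
Proof.
move=> p01 two_b sum_le1.
pose bad (f : {ffun I -> bool}) v := [forall i in A v, f i == b v].
suff /existsP[f /forallP good] : [exists f, [forall v, ~~ bad f v]].
  by exists f => v; apply/forall_inPn/good.
apply/contraT => /existsPn all_bad.
pose count f : R := \sum_v (bad f v)%:R.
have count_ge1 f : 1 <= count f.
  have /forallPn[v /negbNE bad_v] := all_bad f.
  by rewrite /count (bigD1 v) //= bad_v lerDl sumr_ge0.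
have count_true : 1 < count [ffun=> true].
  apply: (@lt_le_trans _ _ (\sum_v (b v)%:R)).
    rewrite (_ : \sum_v _ = #|[set v | b v]|%:R) ?ltr1n //.
    rewrite -sum1_card natr_sum [RHS]big_mkcond /=.
    by apply: eq_bigr => v _; rewrite inE; case: (b v).
  apply: ler_sum => v _; rewrite ler_nat; case bv: (b v) => //=.
  by rewrite lt0b; apply/forall_inP => i _; rewrite ffunE bv.
have expected_le1 : \sum_f coins_pmf f * count f <= 1.
  under eq_bigr => f _ do rewrite mulr_sumr.
  rewrite exchange_big /=.
  by under eq_bigr => v _ do rewrite sum_coins_pmf_const_on.
suff /lt_le_trans/(_ expected_le1) : 1 < \sum_f coins_pmf f * count f.
  by rewrite ltxx.
apply: weighted_sum_gt1 count_true => //; first exact: sum_coins_pmf.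
by move=> f; apply: coins_pmf_gt0.
Qed.
End CoinFlips.

Arguments coin_pmf {R}.
Arguments exists_ffun_avoiding {R I p T}.

Lemma size_undup_le_card (m : nat) (s : seq nat) :
  {in s, forall c, c < m}%N -> (size (undup s) <= #|[set i : 'I_m | val i \in s]|)%N.
Proof.
move=> s_lt; rewrite cardE -(size_map val).
apply: uniq_leq_size (undup_uniq s) _ => c; rewrite mem_undup => cs.
by apply/mapP; exists (Ordinal (s_lt c cs)); rewrite ?mem_enum ?inE.
Qed.

Definition is_inr {A B : Type} (x : A + B) : bool := if x is inr _ then true else false.

Lemma card_is_inr (A B : finType) : #|[set x : A + B | is_inr x]| = #|B|.
Proof.
rewrite -cardsT -(card_imset _ (@inr_inj A B)); apply: eq_card => -[a|b].
  by rewrite !inE; apply/esym/imsetP => -[].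
by rewrite !inE imset_f.
Qed.

Lemma Kbip_rel_is_inr (n0 n1 : nat) (u v : 'I_n0 + 'I_n1) :
  Kbip_rel u v -> is_inr u != is_inr v.
Proof. by case: u v => [u|u] [v|v]. Qed.

Lemma choice_number_le (T : finType) (e : rel T) (t : nat) :
  choosable e t -> (choice_number e <= t)%N.
Proof.
move=> e_t; rewrite /choice_number; case: pselect => // ex.
by case: ex_minnP => n _; apply; apply/asboolP.
Qed.

Lemma Kbip_choosable (R : numDomainType) (n0 n1 t : nat) (p : R) :
  0 < p < 1 -> (1 < n1)%N -> n0%:R * (1 - p) ^+ t + n1%:R * p ^+ t <= 1 ->
  choosable (@Kbip_rel n0 n1) t.
Proof.
move=> p01 n1_gt1 bound S S_size.
pose m := (\max_v \max_(c <- S v) c).+1.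
have S_lt v c : c \in S v -> (c < m)%N.
  by move=> cS; rewrite ltnS (leq_trans _ (leq_bigmax v)) // leq_bigmax_seq.
pose A v := [set i : 'I_m | val i \in S v].
have A_ge v : (t <= #|A v|)%N.
  exact/(leq_trans (S_size v))/size_undup_le_card/S_lt.
have two_right : (1 < #|[set v : 'I_n0 + 'I_n1 | is_inr v]|)%N.
  by rewrite card_is_inr card_ord.
have sum_le1 : \sum_v coin_pmf p (is_inr v) ^+ #|A v| <= 1.
  have [p_gt0 p_lt1] := andP p01.
  have p_in : 0 <= p <= 1 by rewrite !ltW.
  have q_in : 0 <= 1 - p <= 1 by rewrite subr_ge0 gerBl !ltW.
  have pow_le (x : R) v : 0 <= x <= 1 -> x ^+ #|A v| <= x ^+ t.
    by case/andP=> x_ge0 x_le1; apply: ler_wiXn2l.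
  have const_sum (n : nat) (x : R) : n%:R * x = \sum_(i < n) x.
    by rewrite sumr_const card_ord mulr_natl.
  apply: le_trans bound; rewrite !const_sum big_sumType /=.
  by apply: lerD; apply: ler_sum => i _; apply: pow_le.
(* [f i] says that color [i] is reserved for the left side. *)
have [f f_avoid] := exists_ffun_avoiding A (@is_inr _ _) p01 two_right sum_le1.
have /choice[g g_avoid] v : exists i, i \in A v /\ f i != is_inr v.
  by have [i] := f_avoid v; exists i.
exists (fun v => val (g v)); split=> [v | u v /Kbip_rel_is_inr uv].
  by have [] := g_avoid v; rewrite inE.
apply/eqP => /val_inj guv; have [_ fu] := g_avoid u; have [_ fv] := g_avoid v.
by move: fu fv uv; rewrite guv; case: (f (g v)) (is_inr u) (is_inr v) => [] [] [].
Qed.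

Section ExpBounds.
Context {R : realType}.

Lemma log2_ratio (x y : R) : log2 x / log2 y = ln x / ln y.
Proof.
have ln2_neq0 : ln (2 : R) != 0 by rewrite gt_eqF // ln_gt0 // ltr1n.
by rewrite /log2 invf_div mulrA divfK.
Qed.

Lemma expR_pair_le (a c l : R) (t : nat) : 0 < c -> a <= (t%:R - 1) * l ->
  expR (c * a) * expR (- (c * l)) ^+ t + expR a * expR (- l) ^+ t <=
  expR (- (c * l)) + expR (- l).
Proof.
move=> c_gt0; rewrite mulrBl mul1r => a_le.
have exponent_le : a - t%:R * l <= - l by lra.
rewrite -!expRM_natl -!expRD; apply: lerD; rewrite ler_expR; last by rewrite mulrN.
rewrite (_ : c * a + _ = c * (a - t%:R * l)); last by ring.
by rewrite -[in X in _ <= X]mulrN ler_pM2l.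
Qed.

Lemma one_sub_inv_root (x k : R) : 0 < x -> k != 0 ->
  x - 1 = x `^ ((k - 1) / k) -> 1 - x^-1 = expR (- (k^-1 * ln x)).
Proof.
move=> x_gt0 k_neq0 root.
have inv_x : x^-1 = expR (- ln x) by rewrite expRN lnK.
have -> : 1 - x^-1 = (x - 1) * x^-1 by rewrite mulrBl mulfV ?gt_eqF ?mul1r.
by rewrite root /powR gt_eqF // inv_x -expRD; congr expR; field.
Qed.

Lemma Kbip_bound_at_root (n0 n1 t : nat) (k x0 : R) :
  (1 < n0)%N -> (1 < n1)%N -> k = ln n1%:R / ln n0%:R ->
  1 < x0 -> x0 - 1 = x0 `^ ((k - 1) / k) -> ln n1%:R <= (t%:R - 1) * ln x0 ->
  n0%:R * (1 - x0^-1) ^+ t + n1%:R * x0^-1 ^+ t <= 1.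
Proof.
move=> n0_gt1 n1_gt1 k_def x0_gt1 root n1_le.
have ln_n_gt0 n : (1 < n)%N -> 0 < ln n%:R :> R by move=> n_gt1; rewrite ln_gt0 ?ltr1n.
have k_gt0 : 0 < k by rewrite k_def divr_gt0 ?ln_n_gt0.
have x0_gt0 : 0 < x0 := lt_trans ltr01 x0_gt1.
have q_eq : 1 - x0^-1 = expR (- (k^-1 * ln x0)).
  by apply: one_sub_inv_root; rewrite ?lt0r_neq0.
have p_eq : x0^-1 = expR (- ln x0) by rewrite expRN lnK.
have n1_eq : n1%:R = expR (ln n1%:R) :> R by rewrite lnK // posrE ltr0n ltnW.
have n0_eq : n0%:R = expR (k^-1 * ln n1%:R) :> R.
  by rewrite k_def invf_div divfK ?lt0r_neq0 ?ln_n_gt0 // lnK // posrE ltr0n ltnW.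
have one_eq : 1 = expR (- (k^-1 * ln x0)) + expR (- ln x0) by rewrite -q_eq -p_eq subrK.
rewrite q_eq p_eq n1_eq n0_eq [in X in _ <= X]one_eq.
by apply: expR_pair_le; rewrite ?invr_gt0.
Qed.

End ExpBounds.

Theorem theorem2 (R : realType) (n0 n1 : nat) (x0 : R) :
  (2 <= n0)%N -> (n0 <= n1)%N ->
  let k : R := log2 (n1%:R : R) / log2 (n0%:R : R) in
  1 <= x0 -> x0 - 1 - x0 `^ ((k - 1) / k) = 0 ->
  ((choice_number (@Kbip_rel n0 n1))%:Z <=
     Num.ceil (log2 (n1%:R : R) / log2 x0) + 1)%R.
Proof.
move=> n0_gt1 n0_le_n1 k x0_ge1 /eqP; rewrite subr_eq0 => /eqP root.
have n1_gt1 : (1 < n1)%N := leq_trans n0_gt1 n0_le_n1.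
have x0_gt1 : 1 < x0.
  rewrite lt_neqAle x0_ge1 andbT; apply/eqP => x0_eq1.
  by move: root; rewrite -x0_eq1 powR1 subrr => /eqP; rewrite eq_sym oner_eq0.
have L_gt0 : 0 < ln n1%:R / ln x0 by rewrite divr_gt0 ?ln_gt0 ?ltr1n.
rewrite log2_ratio; set L := ln n1%:R / ln x0 in L_gt0 *.
pose t := `|Num.ceil L|%N.+1.
have t_eq : Num.ceil L + 1 = t%:Z.
  by rewrite /t -addn1 PoszD gez0_abs // ceil_ge0 (lt_trans _ L_gt0) ?ltrN10.
rewrite t_eq lez_nat; apply/choice_number_le/(@Kbip_choosable _ _ _ _ x0^-1) => //.
  by rewrite invr_gt0 invf_lt1 (lt_trans ltr01).
apply: (@Kbip_bound_at_root _ _ _ _ k) => //; first by rewrite /k log2_ratio.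
rewrite -ler_pdivrMr ?ln_gt0 // -/L.
by rewrite (_ : t%:R = (t%:Z)%:~R) // -t_eq intrD addrK ceil_ge.
Qed.
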